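(* Let $U$ be a non-empty set and $B\subseteq U^3$ a ternary relation satisfying (BT2): for all $a,b,c\in U$, $B(a,b,c)\Rightarrow B(a,a,b)$. Then $B$ satisfies (BT3): for all $a,b,c\in U$, $B(a,b,c)\wedge B(a,c,b)\Rightarrow b=c$, if and only if $B$ satisfies both (BTW): for all $a,b\in U$, $B(a,b,a)\Rightarrow a=b$, and (C): for all $a,b,c\in U$, if $a,b,c$ are pairwise distinct then $\langle a,b,c\rangle\notin B$ or $\langle a,c,b\rangle\notin B$. *)

Definition BT2 {U : Type} (B : U -> U -> U -> Prop) : Prop :=
  forall a b c : U, B a b c -> B a a b.
Definition BT3 {U : Type} (B : U -> U -> U -> Prop) : Prop :=
  forall a b c : U, B a b c /\ B a c b -> b = c.
Definition BTW {U : Type} (B : U -> U -> U -> Prop) : Prop :=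
  forall a b : U, B a b a -> a = b.
Definition condC {U : Type} (B : U -> U -> U -> Prop) : Prop :=
  forall a b c : U, a <> b -> b <> c -> a <> c -> ~ B a b c \/ ~ B a c b.

From Stdlib Require Import Classical.

Section Betweenness.

Context {U : Type} {B : U -> U -> U -> Prop}.

Lemma BT3_BTW : BT2 B -> BT3 B -> BTW B.
Proof.
  intros H2 H3 a b Haba.
  symmetry; apply (H3 a b a); split.
  - exact Haba.
  - exact (H2 a b a Haba).
Qed.

Lemma BT3_condC : BT3 B -> condC B.
Proof.
  intros H3 a b c _ Hbc _.
  destruct (classic (B a b c)) as [Habc | Habc]; [| now left].
  destruct (classic (B a c b)) as [Hacb | Hacb]; [| now right].
  exfalso; apply Hbc, (H3 a b c); split; assumption.
Qed.

Lemma BTW_condC_BT3 : BTW B -> condC B -> BT3 B.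
Proof.
  intros HW HC a b c [Habc Hacb].
  apply NNPP; intros Hbc.
  destruct (classic (a = b)) as [Hab | Hab].
  - subst b; apply Hbc, HW, Hacb.
  - destruct (classic (a = c)) as [Hac | Hac].
    + subst c; apply Hab, HW, Habc.
    + destruct (HC a b c Hab Hbc Hac); contradiction.
Qed.

End Betweenness.

(* Only the direction (BT3) => (BTW) uses (BT2). *)
Theorem proposition9 (U : Type) (B : U -> U -> U -> Prop) (Hne : inhabited U)
  (H2 : BT2 B) : BT3 B <-> (BTW B /\ condC B).
Proof.
  split.
  - intros H3; split; [exact (BT3_BTW H2 H3) | exact (BT3_condC H3)].
  - intros [HW HC]; exact (BTW_condC_BT3 HW HC).
Qed.
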